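(* A reaction network $(X,\mathscr{R})$ admits a sum formula realization if and only if it is conservative.
   Context: A reaction network (RN) $(X,\mathscr{R})$ consists of a finite non-empty set $X$ of species and a finite non-empty set $\mathscr{R}$ of reactions. Each reaction $r$ is given by stoichiometric coefficients $s^-_{xr},s^+_{xr}\in\mathbb{N}_0$. The stoichiometric matrix $S\in\mathbb{Z}^{X\times\mathscr{R}}$ has entries $S_{xr}=s^+_{xr}-s^-_{xr}$. The paper assumes throughout that RNs are closed: every reaction $r$ has $x,y$ with $S_{xr}<0<S_{yr}$. The RN is conservative if there is $m\in\mathbb{R}^X$ with all entries positive and $m^\top S=0$. A sum formula realization (sf-realization) is a matrix $A\in\mathbb{N}_0^{\mathcal{A}\times X}$, for some non-empty finite set $\mathcal{A}$ of ''atoms'', such that: - (i) every column of $A$ is nonzero; - (ii) $\operatorname{im}A^\top=\ker S^\top$ as subspaces of $\mathbb{R}^X$. *)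

From HB Require Import structures.
From mathcomp Require Import all_boot all_order all_algebra.
Set Implicit Arguments. Unset Strict Implicit. Unset Printing Implicit Defensive.
Import Order.TTheory GRing.Theory Num.Theory.
Local Open Scope ring_scope.

(* A reaction network with species X = 'I_n and reactions 'I_r is given by
   the stoichiometric coefficients s^-_{xr} = sm x r and s^+_{xr} = sp x r. *)

Definition stoich (n r : nat) (sm sp : 'M[nat]_(n, r)) : 'M[int]_(n, r) :=
  \matrix_(x, j) ((sp x j)%:Z - (sm x j)%:Z).

Definition stoichR (R : realFieldType) (n r : nat) (sm sp : 'M[nat]_(n, r))
  : 'M[R]_(n, r) := map_mx (fun z : int => z%:~R) (stoich sm sp).

Definition closed_RN (n r : nat) (sm sp : 'M[nat]_(n, r)) : Prop :=
  forall j : 'I_r, exists x y : 'I_n,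
    (stoich sm sp x j < 0) /\ (0 < stoich sm sp y j).

Definition conservative (R : realFieldType) (n r : nat) (sm sp : 'M[nat]_(n, r))
  : Prop :=
  exists m : 'rV[R]_n, (forall x : 'I_n, 0 < m 0 x) /\ m *m stoichR R sm sp = 0.

(* Vectors of R^X are written as row vectors: im A^T is the row space of A,
   ker S^T = { v | v *m S = 0 } is the row space of kermx S. *)
Definition sf_realization (R : realFieldType) (n r a : nat)
  (sm sp : 'M[nat]_(n, r)) (A : 'M[nat]_(a, n)) : Prop :=
  (forall x : 'I_n, exists i : 'I_a, A i x != 0%N) /\
  (map_mx (fun k : nat => k%:R : R) A == kermx (stoichR R sm sp))%MS.

Definition has_sf_realization (R : realFieldType) (n r : nat)
  (sm sp : 'M[nat]_(n, r)) : Prop :=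
  exists (a : nat) (A : 'M[nat]_(a, n)), (0 < a)%N /\ sf_realization R sm sp A.

From mathcomp Require Import all_boot all_order all_algebra.
From mathcomp Require Import ring lra.
Set Implicit Arguments. Unset Strict Implicit. Unset Printing Implicit Defensive.
Import Order.TTheory GRing.Theory Num.Theory.
Local Open Scope ring_scope.

(* The sum of the rows of a realization is a positive conservation law.
   Conversely, let m > 0 with m S = 0. As S is an integer matrix, ker S^T has
   a rational basis B, and m = w B for a real w. The field R need not be
   archimedean, so w cannot be approximated by rationals; instead, among the
   real y with y B >= 1 take one with the most tight constraints. The tight
   equalities have a rational solution (rank does not change under field
   extension), and if it violated a constraint, moving from y towards it
   would make a new constraint tight. The resulting rational p = q B > 0 lies
   in the row space of B; adding multiples of p to the rows of B and clearing
   denominators gives a nonnegative integer matrix with the same row space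
   and nonzero columns. *)

Lemma segment_reaches_new_face (R : realFieldType) (I : finType) (u v : I -> R) (j1 : I) :
  (forall j, 1 <= u j) -> (forall j, u j = 1 -> v j = 1) -> v j1 < 1 ->
  exists t : R, let w j := u j + t * (v j - u j) in
  [/\ forall j, 1 <= w j, forall j, u j = 1 -> w j = 1 & exists j0, u j0 != 1 /\ w j0 = 1].
Proof.
move=> u_ge1 u_tight v_lt1.
pose rho j := (u j - 1) / (u j - v j).
have rhoE j : v j < 1 -> u j - rho j * (u j - v j) = 1.
  by move=> vj; rewrite /rho mulfVK //; have := u_ge1 j; lra.
case: (@arg_minP _ _ _ j1 (fun j => v j < 1) rho v_lt1) => j0 vj0 rho_min.
have u1 := u_ge1 j0.
have rho_ge0 : 0 <= rho j0 by rewrite /rho divr_ge0 //; lra.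
have rho_le1 : rho j0 <= 1 by rewrite /rho ler_pdivrMr; lra.
exists (rho j0); split.
- move=> j; have uj := u_ge1 j; case: (ltP (v j) 1) => vj.
    have := rho_min j vj; have := rhoE j vj; nra.
  nra.
- by move=> j /[dup] /u_tight -> ->; lra.
- exists j0; split; last by have := rhoE j0 vj0; lra.
  by apply/eqP => /u_tight; lra.
Qed.

Section RationalSolutions.
Variables (R : realFieldType) (n m : nat) (C : 'M[rat]_(n, m)).
Local Notation CR := (map_mx (@ratr R) C).

Lemma rat_solution_on_tight_set (y : 'rV[R]_n) :
  exists z : 'rV[rat]_n, forall j, (y *m CR) 0 j = 1 -> (z *m C) 0 j = 1.
Proof.
pose J := [set j | (y *m CR) 0 j == 1].
pose d : 'rV[rat]_m := \row_j (j \in J)%:R.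
have : ((const_mx 1 : 'rV[rat]_m) *m diag_mx d <= C *m diag_mx d)%MS.
  rewrite -(map_submx (@ratr R)) !map_mxM map_const_mx rmorph1 map_diag_mx.
  apply/submxP; exists y; rewrite mulmxA !mul_mx_diag; apply/rowP => j.
  rewrite !mxE inE; case: eqP => [yj|_]; last by rewrite rmorph0 !mulr0.
  by rewrite -yj !mxE.
case/submxP => z; rewrite mulmxA !mul_mx_diag => /rowP zd.
exists z => j yj; have Jj : j \in J by rewrite inE yj.
by have := zd j; rewrite !mxE Jj !mulr1.
Qed.

Lemma rat_solution_ge1 (y : 'rV[R]_n) : (forall j, 1 <= (y *m CR) 0 j) ->
  exists z : 'rV[rat]_n, forall j, 1 <= (z *m C) 0 j.
Proof.
have [k] := ubnP #|[set j | (y *m CR) 0 j != 1]|.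
elim: k y => // k IHk y slack_y y_ge1.
have [z z_tight] := rat_solution_on_tight_set y.
have [z_ge1|] := boolP [forall j, 1 <= (z *m C) 0 j].
  by exists z => j; apply: (forallP z_ge1).
rewrite negb_forall => /existsP [j1]; rewrite -ltNge -(ltr_rat R) rmorph1 => z_lt1.
pose zR := map_mx (@ratr R) z.
have zRE j : (zR *m CR) 0 j = ratr ((z *m C) 0 j) by rewrite -map_mxM mxE.
have [|t [y'_ge1 y'_tight [j0 [y_j0 y'_j0]]]] :=
  segment_reaches_new_face (v := fun j => ratr ((z *m C) 0 j)) y_ge1 _ z_lt1.
  by move=> j /z_tight ->; rewrite rmorph1.
have y'E j : ((y + t *: (zR - y)) *m CR) 0 j
    = (y *m CR) 0 j + t * (ratr ((z *m C) 0 j) - (y *m CR) 0 j).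
  rewrite mulmxDl -scalemxAl mulmxBl -zRE.
  by set a := y *m CR; set b := zR *m CR; rewrite !mxE.
apply: (IHk (y + t *: (zR - y))); last by move=> j; rewrite y'E.
rewrite -ltnS; apply: leq_trans slack_y; rewrite ltnS; apply/proper_card/properP.
split.
  apply/subsetP => j; rewrite !inE y'E; apply: contraNN => /eqP y_j.
  by rewrite y'_tight.
exists j0; first by rewrite inE.
by rewrite inE y'E y'_j0 eqxx.
Qed.

Lemma rat_solution_gt0 (y : 'rV[R]_n) : (forall j, 0 < (y *m CR) 0 j) ->
  exists z : 'rV[rat]_n, forall j, 0 < (z *m C) 0 j.
Proof.
move=> y_gt0; pose u := y *m CR.
have [|z z_ge1] := rat_solution_ge1 (y := (\sum_j (u 0 j)^-1) *: y).
  move=> j; rewrite -scalemxAl mxE -/u (bigD1 j) //= mulrDl mulVf ?gt_eqF //.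
  rewrite lerDl mulr_ge0 ?(ltW (y_gt0 j)) //; apply: sumr_ge0 => i _.
  by rewrite invr_ge0 (ltW (y_gt0 i)).
by exists z => j; apply: lt_le_trans (z_ge1 j).
Qed.
End RationalSolutions.

Lemma denq_prod_scale_int (I : finType) (g : I -> rat) i :
  exists z : int, (\prod_k denq (g k))%:~R * g i = z%:~R.
Proof.
exists (numq (g i) * \prod_(k | k != i) denq (g k)).
by rewrite (bigD1 i) //= !intrM numqE; ring.
Qed.

Lemma nonneg_rat_mx_scale_nat m n (M : 'M[rat]_(m, n)) :
  (forall i j, 0 <= M i j) ->
  exists2 d : rat, 0 < d & exists A : 'M[nat]_(m, n), map_mx (fun k => k%:R) A = d *: M.
Proof.
move=> M_ge0; pose d : rat := (\prod_(k : 'I_m * 'I_n) denq (M k.1 k.2))%:~R.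
have d_gt0 : 0 < d by rewrite ltr0z; apply: prodr_gt0 => k _; exact: denq_gt0.
have dM_nat i j : d * M i j \is a Num.nat.
  rewrite natrEint mulr_ge0 ?(ltW d_gt0) ?M_ge0 // andbT.
  by have [z ->] := denq_prod_scale_int (fun k => M k.1 k.2) (i, j); exact: intr_int.
exists d => //; exists (\matrix_(i, j) Num.trunc (d * M i j)).
by apply/matrixP => i j; rewrite !mxE truncnK.
Qed.

Lemma shift_by_pos_row_ge0 (F : realFieldType) m n (B : 'M[F]_(m, n)) (p : 'rV[F]_n) :
  (forall j, 0 < p 0 j) -> exists c : F, forall i j, 0 <= (const_mx c *m p + B) i j.
Proof.
move=> p_gt0; exists (\sum_(k : 'I_m * 'I_n) `|B k.1 k.2| / p 0 k.2) => i j.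
rewrite !mxE big_ord1 mxE (bigD1 (i, j)) //= mulrDl mulfVK ?gt_eqF //.
set rest := \sum_(k | _) _.
have : 0 <= rest * p 0 j.
  rewrite mulr_ge0 ?(ltW (p_gt0 j)) //; apply: sumr_ge0 => k _.
  by rewrite divr_ge0 ?(ltW (p_gt0 _)).
by have := ler_norm (- B i j); rewrite normrN; lra.
Qed.

Lemma col_mx_addMl_eqmx (F : fieldType) m1 m2 n (p : 'M[F]_(m1, n)) (B : 'M_(m2, n))
    (X : 'M_(m2, m1)) : (col_mx p (X *m p + B) :=: p + B)%MS.
Proof. exact: eqmx_trans (eqmx_sym (addsmxE _ _)) (addsmx_addKl _ (submxMl X p)). Qed.

Lemma nat_mx_spanning_rat_row_space m n (B : 'M[rat]_(m, n)) (p : 'rV[rat]_n) :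
  (p <= B)%MS -> (forall j, 0 < p 0 j) ->
  exists A : 'M[nat]_(1 + m, n),
    (forall j, A (lshift m ord0) j != 0%N) /\ (map_mx (fun k => k%:R) A == B)%MS.
Proof.
move=> pB p_gt0; have [c shift_ge0] := shift_by_pos_row_ge0 B p_gt0.
pose M := col_mx p (const_mx c *m p + B).
have [|d d_gt0 [A Ad]] := nonneg_rat_mx_scale_nat (M := M).
  move=> i j; rewrite -[i]splitK; case: (split i) => k /=.
    by rewrite col_mxEu (ord1 k); exact: ltW.
  by rewrite col_mxEd.
exists A; split.
  move=> j; have /matrixP/(_ (lshift m ord0) j) := Ad.
  rewrite mxE [in X in _ = X]mxE col_mxEu -(pnatr_eq0 rat) => ->.
  by rewrite mulf_neq0 ?gt_eqF.
rewrite Ad; apply/eqmxP.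
apply: eqmx_trans (eqmx_scale _ (lt0r_neq0 d_gt0)) _.
apply: eqmx_trans (col_mx_addMl_eqmx _ _ _) _.
exact/addsmx_idPr.
Qed.

Lemma stoichR_ratr (R : realFieldType) n r (sm sp : 'M[nat]_(n, r)) :
  stoichR R sm sp = map_mx (@ratr R) (stoichR rat sm sp).
Proof. by apply/matrixP => i j; rewrite !mxE ratr_int. Qed.

Lemma has_sf_realization_conservative (R : realFieldType) n r (sm sp : 'M[nat]_(n, r)) :
  has_sf_realization R sm sp -> conservative R sm sp.
Proof.
move=> [a [A [a_gt0 [A_col /andP [A_ker _]]]]].
set AR := map_mx _ A in A_ker.
exists (const_mx 1 *m AR); split.
  move=> x; rewrite !mxE; under eq_bigr do rewrite !mxE mul1r.
  have [i Aix] := A_col x.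
  by rewrite -natr_sum ltr0n (bigD1 i) //= ltn_addr // lt0n.
by apply/sub_kermxP; exact: submx_trans (submxMl _ _) A_ker.
Qed.

Lemma conservative_has_sf_realization (R : realFieldType) n r (sm sp : 'M[nat]_(n, r)) :
  conservative R sm sp -> has_sf_realization R sm sp.
Proof.
move=> [m [m_gt0 m_ker]].
pose B := kermx (stoichR rat sm sp).
have kerB : kermx (stoichR R sm sp) = map_mx ratr B by rewrite stoichR_ratr map_kermx.
have /submxP [w mE] : (m <= map_mx (@ratr R) B)%MS by rewrite -kerB; apply/sub_kermxP.
have [|q qB_gt0] := rat_solution_gt0 (y := w) (C := B); first by move=> j; rewrite -mE.
have [A [A_top A_span]] := nat_mx_spanning_rat_row_space (submxMl q B) qB_gt0.
exists (1 + n)%N, A; split => //; split; first by move=> x; exists (lshift n ord0).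
have -> : map_mx (fun k => k%:R : R) A = map_mx ratr (map_mx (fun k => k%:R) A).
  by apply/matrixP => i j; rewrite !mxE ratr_nat.
by rewrite kerB !map_submx.
Qed.

Theorem proposition10 (R : realFieldType) (n r : nat) (sm sp : 'M[nat]_(n, r)) :
  (0 < n)%N -> (0 < r)%N -> closed_RN sm sp ->
  (has_sf_realization R sm sp <-> conservative R sm sp).
Proof.
move=> _ _ _; split.
  exact: has_sf_realization_conservative.
exact: conservative_has_sf_realization.
Qed.
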